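(* Let $d, p \in \mathbb{N}$ be given. There exists an increasing function $g: \mathbb{N} \rightarrow \mathbb{N}$ such that, if $\zeta_{d, p}: \mathbb{N} \times \mathbb{N} \rightarrow \mathbb{N}$ is the function $\zeta_{d, p}(n_1, n_2) = \mathsf{tower}(n_2, g(d) \cdot (n_1 + 1) \cdot (n_1 + \log p))$, then the following are true for each $m \in \mathbb{N}_+$. (1) For every tree $t \in \mathcal{T}_{d, p}$, there exists a leaf-hereditary subtree $t'$ of $t$ such that: (i) the heights of $t'$ and $t$ are the same; (ii) $|t'|$ is at most $\zeta_{d, p}(m, d)$; and (iii) $t' \equiv_{\mathrm{MSO}[m]} t$. (2) The index of the $\equiv_{\mathrm{MSO}[m]}$ relation over $\mathcal{T}_{d, p}$ is at most $\zeta_{d, p}(m, d+1)$ if $d \ge 1$, and is $p$ if $d = 0$.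
   Context: A $p$-labeled rooted tree is a structure over the vocabulary $\{E, \mathsf{root}, P_1,\dots,P_p\}$ such that the $E$-reduct is a (possibly infinite) tree, $\mathsf{root}$ is interpreted as a single node (the root), and the sets $P_1,\dots,P_p$ partition the nodes (some may be empty). The height of a tree is the maximum root-to-leaf distance. $\mathcal{T}_{d,p}$ is the class of all (finite or infinite) $p$-labeled rooted trees of height at most $d$. A tree $t_2$ is a leaf-hereditary subtree of $t_1$ if $t_2$ and $t_1$ have the same root, $t_2$ is a substructure of $t_1$, and every leaf of $t_2$ is a leaf of $t_1$ (equivalently, $t_2$ is obtained from $t_1$ by deleting the subtrees rooted at some set of nodes). $|t|$ is the number of nodes. $A \equiv_{\mathrm{MSO}[m]} B$ means $A$ and $B$ satisfy the same monadic second-order sentences of quantifier rank at most $m$; the index over a class is the number of equivalence classes among structures of the class. $\mathsf{tower}(0,n)=n$, $\mathsf{tower}(k,n)=2^{\mathsf{tower}(k-1,n)}$. *)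

From Stdlib Require List.
From mathcomp Require Import all_boot.
Set Implicit Arguments. Unset Strict Implicit. Unset Printing Implicit Defensive.

(* vocabulary {E, root, P_1..P_p}: E binary (directed, parent -> child),
   root a constant, labelling lab : V -> 'I_p encodes the partition P_1..P_p *)
Record lstruct (p : nat) := LStruct {
  V : Type;
  E : V -> V -> Prop;
  root : V;
  lab : V -> 'I_p
}.
Arguments LStruct {p}.
Arguments V {p}. Arguments E {p}. Arguments root {p}. Arguments lab {p}.

Inductive reach (p : nat) (t : lstruct p) : nat -> V t -> V t -> Prop :=
| reach0 u : @reach p t 0 u u
| reachS k u w v : E t u w -> @reach p t k w v -> @reach p t k.+1 u v.
Arguments reach {p}.

Definition in_T (d p : nat) (t : lstruct p) : Prop :=
  (forall v, ~ E t v (root t)) /\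
  (forall v, v <> root t -> exists u, E t u v /\ forall u', E t u' v -> u' = u) /\
  (forall v, exists k, k <= d /\ reach t k (root t) v).

Definition has_height {p} (t : lstruct p) (h : nat) : Prop :=
  (exists v, reach t h (root t) v) /\
  (forall k v, reach t k (root t) v -> k <= h).

Definition card_le {p} (t : lstruct p) (N : nat) : Prop :=
  exists l : seq (V t), size l <= N /\ forall v, List.In v l.

(* t2 is a leaf-hereditary subtree of t1 (up to isomorphism): t2 embeds into t1
   as an induced substructure (E, root, labels preserved and reflected), and
   every leaf of t2 is mapped to a leaf of t1. *)
Definition leaf_hereditary_subtree {p} (t2 t1 : lstruct p) : Prop :=
  exists h : V t2 -> V t1,
    (forall x y, h x = h y -> x = y) /\
    (forall x y, E t2 x y <-> E t1 (h x) (h y)) /\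
    h (root t2) = root t1 /\
    (forall x, lab t2 x = lab t1 (h x)) /\
    (forall x, (forall y, ~ E t2 x y) -> forall z, ~ E t1 (h x) z).

Inductive term := TVar of nat | TRoot.

Inductive formula (p : nat) :=
| FE of term & term
| FEq of term & term
| FP of 'I_p & term
| FIn of term & nat
| FNot of formula p
| FOr of formula p & formula p
| FEx1 of nat & formula p
| FExS of nat & formula p.

Arguments FE {p}. Arguments FEq {p}. Arguments FIn {p}.

Fixpoint qrank {p} (f : formula p) : nat :=
  match f with
  | FNot g => qrank g
  | FOr g h => maxn (qrank g) (qrank h)
  | FEx1 _ g => (qrank g).+1
  | FExS _ g => (qrank g).+1
  | _ => 0
  end.

Definition tvars (s : term) : seq nat := if s is TVar n then [:: n] else [::].

Fixpoint fv1 {p} (f : formula p) : seq nat :=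
  match f with
  | FE s u | FEq s u => tvars s ++ tvars u
  | FP _ s | FIn s _ => tvars s
  | FNot g => fv1 g
  | FOr g h => fv1 g ++ fv1 h
  | FEx1 x g => filter (fun y => y != x) (fv1 g)
  | FExS _ g => fv1 g
  end.

Fixpoint fvS {p} (f : formula p) : seq nat :=
  match f with
  | FIn _ X => [:: X]
  | FNot g => fvS g
  | FOr g h => fvS g ++ fvS h
  | FEx1 _ g => fvS g
  | FExS X g => filter (fun Y => Y != X) (fvS g)
  | _ => [::]
  end.

Definition sentence {p} (f : formula p) : Prop := fv1 f = [::] /\ fvS f = [::].

Definition teval {p} (t : lstruct p) (rho : nat -> V t) (s : term) : V t :=
  if s is TVar n then rho n else root t.

Fixpoint sat {p} (t : lstruct p) (rho : nat -> V t) (sig : nat -> V t -> Prop)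
    (f : formula p) : Prop :=
  match f with
  | FE s u => E t (teval rho s) (teval rho u)
  | FEq s u => teval rho s = teval rho u
  | FP i s => lab t (teval rho s) = i
  | FIn s X => sig X (teval rho s)
  | FNot g => ~ sat rho sig g
  | FOr g h => sat rho sig g \/ sat rho sig h
  | FEx1 x g => exists v : V t, sat (fun y => if y == x then v else rho y) sig g
  | FExS X g => exists S : V t -> Prop,
                  sat rho (fun Y => if Y == X then S else sig Y) g
  end.

(* satisfaction of a sentence (assignment irrelevant; use a default one) *)
Definition models {p} (t : lstruct p) (f : formula p) : Prop :=
  sat (fun _ => root t) (fun _ _ => False) f.

Definition mso_equiv (m : nat) {p} (A B : lstruct p) : Prop :=
  forall f : formula p, sentence f -> qrank f <= m -> (models A f <-> models B f).

(* index of \equiv_{MSO[m]} over T_{d,p} is at most N: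
   among any N+1 trees of T_{d,p}, two are equivalent *)
Definition index_le (m d p N : nat) : Prop :=
  forall f : 'I_N.+1 -> lstruct p, (forall i, @in_T d p (f i)) ->
    exists i j, i != j /\ mso_equiv m (f i) (f j).

Definition index_ge (m d p N : nat) : Prop :=
  exists f : 'I_N -> lstruct p, (forall i, @in_T d p (f i)) /\
    forall i j, i != j -> ~ mso_equiv m (f i) (f j).

Fixpoint tower (k n : nat) : nat :=
  if k is k'.+1 then 2 ^ tower k' n else n.

(* zeta_{d,p}(n1,n2) = tower(n2, g(d) * (n1+1) * (n1 + log p)), log = ceil log2 *)
Definition zeta (g : nat -> nat) (d p n1 n2 : nat) : nat :=
  tower n2 (g d * n1.+1 * (n1 + up_log 2 p)).

(* Types with capped counts play the role of Ehrenfeucht-Fraisse games.  Colour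
   every node by its label and by its membership in [m] registers, which hold the
   sets and (as singletons) the points chosen so far.  The [h]-type of a node is
   its colour together with, for each [(h-1)]-type, the number of its children of
   that type, counted only up to a threshold [th (h-1)].  Choosing thresholds
   [th_(r+1) = #|types for th_r| * th_r], equality of the root types for [th_(r+1)]
   survives one set move with thresholds [th_r]: by pigeonhole, the children of
   each coarse type can be recoloured so that the counts of the finer types agree,
   and the responding set is glued from responses on the children.  A point move
   is a set move whose type says "exactly one marked node".  Hence equal root
   types for [th_m] imply [MSO[m]]-equivalence.  Keeping below every node only
   [th_m] children of each type gives a leaf-hereditary subtree with the same root
   type; counting types and kept children gives the tower bounds. *)

From Pilot Require Import Defs.
From Stdlib Require Import ClassicalEpsilon.
From Stdlib Require List.
From mathcomp Require Import all_boot zify.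
(* [all_boot] brings fingraph's [root] back into scope over [Defs.root]. *)
Import Defs.

Set Implicit Arguments. Unset Strict Implicit. Unset Printing Implicit Defensive.

(** * Cardinalities capped at a threshold *)

Definition asbool (P : Prop) : bool := if excluded_middle_informative P then true else false.

Lemma asboolP (P : Prop) : reflect P (asbool P).
Proof. by rewrite /asbool; case: excluded_middle_informative => h; constructor. Qed.

Lemma eq_asbool (P Q : Prop) : (P <-> Q) -> asbool P = asbool Q.
Proof. by move=> PQ; case: (asboolP P) => a; case: (asboolP Q) => b //; tauto. Qed.

Section CappedCount.
Variable T : Type.
Implicit Types A B : T -> Prop.

Definition atleast n A := exists e : 'I_n -> T, injective e /\ forall i, A (e i).

(* [capcard k A] is [minn k #|A|], for predicates that may be infinite and undecidable. *)
Fixpoint capcard k A : nat :=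
  if k is k'.+1 then (if asbool (atleast k A) then k else capcard k' A) else 0.

Lemma atleast0 A : atleast 0 A.
Proof. by exists (fun i : 'I_0 => False_rect _ (notF (ltn_ord i))); split; case. Qed.

Lemma atleast1 A a : A a -> atleast 1 A.
Proof. by exists (fun _ => a); split => // i j _; rewrite (ord1 i) (ord1 j). Qed.

Lemma atleast_le A n k : k <= n -> atleast n A -> atleast k A.
Proof.
move=> kn [e [ie Ae]]; exists (fun i : 'I_k => e (widen_ord kn i)); split => //.
by move=> i j /ie /(congr1 val) ij; apply: val_inj.
Qed.

Lemma atleast_sub A B n : (forall z, A z -> B z) -> atleast n A -> atleast n B.
Proof. by move=> AB [e [ie Ae]]; exists e; split => // i; apply: AB. Qed.

Lemma atleast_gt0_ex A n : 0 < n -> atleast n A -> exists a, A a.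
Proof. by move=> n0 [e [_ Ae]]; exists (e (Ordinal n0)). Qed.

Lemma capcard_le k A : capcard k A <= k.
Proof. by elim: k => //= k IH; case: asboolP => // _; apply: leqW. Qed.

Lemma capcard_atleast k A : atleast (capcard k A) A.
Proof. by elim: k => [|k IH] /=; [apply: atleast0 | case: asboolP]. Qed.

Lemma capcard_ge k A n : n <= k -> atleast n A -> n <= capcard k A.
Proof.
elim: k => [|k IH] /=; first by rewrite leqn0 => /eqP ->.
case: asboolP => // nk; rewrite leq_eqVlt => /orP [/eqP -> //|]; exact: IH.
Qed.

Lemma capcard_lt_atleast k A n : capcard k A < k -> atleast n A -> n <= capcard k A.
Proof.
move=> lt An; have := capcard_ge (geq_minr n k) (atleast_le (geq_minl n k) An); lia.
Qed.

Lemma capcard_eq k A n :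
  n <= k -> atleast n A -> (n < k -> ~ atleast n.+1 A) -> capcard k A = n.
Proof.
move=> nk An An1; apply/eqP; rewrite eqn_leq capcard_ge // andbT leqNgt.
apply/negP => lt; have nk' : n < k by apply: leq_trans lt (capcard_le _ _).
by apply: (An1 nk'); apply: atleast_le lt _; apply: capcard_atleast.
Qed.

Lemma eq_capcard k A B : (forall z, A z <-> B z) -> capcard k A = capcard k B.
Proof.
move=> AB; apply: capcard_eq; first exact: capcard_le.
  by apply: atleast_sub (capcard_atleast k B) => z /AB.
move=> lt /(atleast_sub (fun z => proj1 (AB z))) /(capcard_lt_atleast lt).
by rewrite ltnn.
Qed.

Lemma capcard_gt0 k A a : 0 < k -> A a -> 0 < capcard k A.
Proof. by move=> k0 /atleast1; apply: capcard_ge. Qed.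

Lemma capcard_gt0_ex k A : 0 < capcard k A -> exists a, A a.
Proof. by move=> /atleast_gt0_ex; apply; apply: capcard_atleast. Qed.

Lemma capcard_shrink A k k' : capcard k' A < k' -> k' <= k -> capcard k A = capcard k' A.
Proof.
move=> lt le; apply: capcard_eq; [lia | exact: capcard_atleast |].
by move=> _ /(capcard_lt_atleast lt); lia.
Qed.

Lemma capcard0 k A : (forall z, ~ A z) -> capcard k A = 0.
Proof.
by move=> A0; apply: capcard_eq => // [|_ [e [_ Ae]]]; [apply: atleast0 | apply: (A0 _ (Ae ord0))].
Qed.

Lemma atleast_image (I : finType) (e : I -> T) (J : pred I) :
  injective e -> atleast #|J| (fun z => exists2 i, J i & e i = z).
Proof.
move=> ie; exists (fun k => e (enum_val k)); split; first by move=> a b /ie /enum_val_inj.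
by move=> k; exists (enum_val k) => //; apply: enum_valP.
Qed.

Lemma atleast_image_le (I : finType) (e : I -> T) (J : pred I) n :
  atleast n (fun z => exists2 i, J i & e i = z) -> n <= #|J|.
Proof.
move=> [f [fi fA]].
have pick k : {i | J i & e i = f k}.
  have /constructive_indefinite_description [i [Ji ei]] : exists i, J i /\ e i = f k.
    by case: (fA k) => i Ji ei; exists i.
  by exists i.
have pick_inj : injective (fun k => s2val (pick k)).
  by move=> a b hab; apply: fi; rewrite -(s2valP' (pick a)) -(s2valP' (pick b)) hab.
rewrite -[n]card_ord -(card_imset (mem 'I_n) pick_inj).
by apply: subset_leq_card; apply/subsetP => x /imsetP [k _ ->]; apply: (s2valP (pick k)).
Qed.

Lemma capcard_image k (I : finType) (e : I -> T) (J : pred I) A :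
  injective e -> (forall z, A z <-> exists2 i, J i & e i = z) -> capcard k A = minn k #|J|.
Proof.
move=> ie hA; rewrite (eq_capcard k hA); apply: capcard_eq; first exact: geq_minl.
  by apply: atleast_le (atleast_image J ie); apply: geq_minr.
by move=> lt /atleast_image_le; lia.
Qed.

Lemma capcard_enum k A n (e : 'I_n -> T) : capcard k A = n -> n < k -> injective e ->
  (forall i, A (e i)) -> forall a, A a -> exists i, e i = a.
Proof.
move=> An nk ie Ae a Aa; apply: NNPP => a_new.
have : atleast n.+1 A.
  exists (fun i : 'I_n.+1 => if unlift ord_max i is Some j then e j else a); split.
    move=> i j; case: unliftP => [i' ->|->]; case: unliftP => [j' ->|->] //.
    - by move/ie ->.
    - by move=> ea; case: a_new; exists i'.
    - by move=> ae; case: a_new; exists j'.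
  by move=> i; case: unliftP.
have lt : capcard k A < k by rewrite An.
by move/(capcard_lt_atleast lt); rewrite An ltnn.
Qed.

Lemma atleast_union A B a b : (forall z, A z -> B z -> False) ->
  atleast a A -> atleast b B -> atleast (a + b) (fun z => A z \/ B z).
Proof.
move=> AB0 [ea [ia Aa]] [eb [ib Bb]].
exists (fun i => match split i with inl x => ea x | inr y => eb y end); split.
- move=> i j /=; case: (splitP i) => x hx; case: (splitP j) => y hy exy.
  + by apply: val_inj; rewrite /= hx hy (ia _ _ exy).
  + by case: (AB0 (ea x)); [apply: Aa | rewrite exy; apply: Bb].
  + by case: (AB0 (eb x)); [rewrite exy; apply: Aa | apply: Bb].
  + by apply: val_inj; rewrite /= hx hy (ib _ _ exy).
- by move=> i; case: (splitP i) => x _; [left | right].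
Qed.

Lemma atleast_union_split A B n : atleast n (fun z => A z \/ B z) ->
  exists n1 n2, n = n1 + n2 /\ atleast n1 A /\ atleast n2 B.
Proof.
move=> [e [ie AB]]; pose J := [pred i | asbool (A (e i))].
exists #|J|, #|[predC J]|; split; first by rewrite cardC card_ord.
split; first by apply: atleast_sub (atleast_image J ie) => z [i /asboolP Ai <-].
apply: atleast_sub (atleast_image [predC J] ie) => z [i /= /asboolP nAi <-].
by case: (AB i).
Qed.

Lemma capcard_union k A B : (forall z, A z -> B z -> False) ->
  capcard k (fun z => A z \/ B z) = minn k (capcard k A + capcard k B).
Proof.
move=> AB0; apply: capcard_eq; first exact: geq_minl.
  apply: atleast_le (atleast_union AB0 (capcard_atleast k A) (capcard_atleast k B)).
  exact: geq_minr.
move=> lt /atleast_union_split [n1 [n2 [n12 [An1 Bn2]]]].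
have ltA : capcard k A < k by lia.
have ltB : capcard k B < k by lia.
have := capcard_lt_atleast ltA An1; have := capcard_lt_atleast ltB Bn2; lia.
Qed.

Lemma capcard_partition (I : finType) (key : T -> I) k A :
  capcard k A = minn k (\sum_(i : I) capcard k (fun z => A z /\ key z = i)).
Proof.
rewrite -[in LHS](eq_capcard k (A := fun z => exists2 i, i \in index_enum I & A z /\ key z = i)).
  elim: (index_enum I) (index_enum_uniq I) => [|i s IH] /=.
    by move=> _; rewrite big_nil minn0; apply: capcard0 => z [].
  move=> /andP [i_s s_uniq]; rewrite big_cons.
  rewrite (eq_capcard k (B := fun z => (A z /\ key z = i) \/
                                        exists2 j, j \in s & A z /\ key z = j)).
    rewrite capcard_union; first by have := IH s_uniq; lia.
    by move=> z [_ ki] [j js [_ kj]]; move: i_s; rewrite -ki kj js.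
  move=> z; split.
    by move=> [j]; rewrite inE => /orP [/eqP -> | js] ?; [left | right; exists j].
  by case=> [? | [j js ?]]; [exists i; rewrite ?inE ?eqxx | exists j; rewrite ?inE ?js ?orbT].
by move=> z; split => [[i _ []] | Az] //; exists (key z); rewrite ?mem_index_enum.
Qed.

End CappedCount.

Lemma capcard_inj (T1 T2 : Type) (f : T1 -> T2) (A : T1 -> Prop) (B : T2 -> Prop) k :
  injective f -> (forall z, B z <-> exists a, A a /\ f a = z) -> capcard k B = capcard k A.
Proof.
move=> fi hB; suff AB n : atleast n B <-> atleast n A.
  by elim: k => [|k IH] //=; rewrite (eq_asbool (AB k.+1)) IH.
split=> [[e [ie Be]] | [e [ie Ae]]]; last first.
  by exists (fun i => f (e i)); split => [i j /fi /ie | i] //; apply/hB; exists (e i).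
have pick i : {a | A a /\ f a = e i} by apply: constructive_indefinite_description; apply/hB.
exists (fun i => sval (pick i)); split; last by move=> i; case: (svalP (pick i)).
move=> i j eij; apply: ie.
by rewrite -(proj2 (svalP (pick i))) -(proj2 (svalP (pick j))) eij.
Qed.

(** * Recolouring *)

Lemma card_nth (T : eqType) (x0 : T) (s : seq T) n (P : pred T) : size s = n ->
  #|[pred i : 'I_n | P (nth x0 s i)]| = count P s.
Proof.
move=> <-; rewrite -[in RHS](mkseq_nth x0 s) /mkseq count_map -val_enum_ord count_map.
by rewrite cardE /enum_mem size_filter count_filter; apply: eq_count => i; rewrite /= inE andbT.
Qed.

Lemma count_expand (T : eqType) (c : T -> nat) (l : seq T) y : uniq l ->
  count (pred1 y) (flatten [seq nseq (c x) x | x <- l]) = (y \in l) * c y.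
Proof.
elim: l => [|x l IH] //= /andP [xl ul]; rewrite count_cat count_nseq IH // inE /=.
by case: (eqVneq y x) => [->|] //=; rewrite (negbTE xl) addn0.
Qed.

Lemma size_expand (T : Type) (c : T -> nat) (l : seq T) :
  size (flatten [seq nseq (c x) x | x <- l]) = \sum_(x <- l) c x.
Proof. by elim: l => [|x l IH] /=; rewrite ?big_nil ?big_cons ?size_cat ?size_nseq ?IH. Qed.

Lemma fill_classes (S : finType) (s0 : S) (c : S -> nat) n :
  \sum_(s | s != s0) c s <= n -> exists phi : 'I_n -> S, forall s,
    #|[pred i | phi i == s]| = if s == s0 then n - \sum_(s | s != s0) c s else c s.
Proof.
rewrite -big_filter; set l := [seq s <- index_enum S | s != s0] => le_n.
pose sq := flatten [seq nseq (c x) x | x <- l].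
pose sq' := sq ++ nseq (n - size sq) s0.
have size_sq' : size sq' = n by rewrite size_cat size_nseq size_expand; lia.
exists (fun i => nth s0 sq' i) => s; rewrite (card_nth s0 (pred1 s) size_sq').
rewrite count_cat count_expand ?filter_uniq ?index_enum_uniq // count_nseq size_expand.
by rewrite mem_filter mem_index_enum andbT /= eq_sym; case: eqP; rewrite /= ?mul0n ?mul1n ?addn0.
Qed.

Definition preim_opt (I T : Type) (e : I -> T) (b : T) : option I :=
  if excluded_middle_informative (exists i, e i = b) is left h
  then Some (proj1_sig (constructive_indefinite_description _ h)) else None.

Lemma preim_optK (I T : Type) (e : I -> T) i : injective e -> preim_opt e (e i) = Some i.
Proof.
rewrite /preim_opt => ie; case: excluded_middle_informative => [h|[]]; last by exists i.
by case: constructive_indefinite_description => x /= exi; rewrite (ie _ _ exi).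
Qed.

Lemma preim_optN (I T : Type) (e : I -> T) b : (forall i, e i <> b) -> preim_opt e b = None.
Proof.
rewrite /preim_opt => nb; case: excluded_middle_informative => // h.
by exfalso; case: h => i /nb.
Qed.

Section Recolouring.
Variables (T1 T2 : Type) (S : finType) (s0 : S).
Variables (A : T1 -> Prop) (B : T2 -> Prop) (g : T1 -> S).

Definition recolours (f : T2 -> S) k :=
  (forall b, B b -> exists a, A a /\ g a = f b) /\
  forall s, capcard k (fun b => B b /\ f b = s) = capcard k (fun a => A a /\ g a = s).

Lemma recolour_enum n k : capcard n A = capcard n B -> capcard n B < n ->
  exists f, recolours f k.
Proof.
move=> AB ltB; have [eb [ib Bb]] := capcard_atleast n B.
have := capcard_atleast n A; rewrite AB => -[ea [ia Aa]].
have enumA := capcard_enum AB ltB ia Aa.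
have enumB := capcard_enum (erefl _) ltB ib Bb.
exists (fun b => if preim_opt eb b is Some i then g (ea i) else s0); split.
  by move=> b /enumB [i <-]; rewrite preim_optK //; exists (ea i).
move=> s; pose J := [pred i | g (ea i) == s].
rewrite (capcard_image (J := J) k ib) ?(capcard_image (J := J) k ia) //.
  move=> a; split=> [[/enumA [i <-] /eqP gi] | [i /eqP gi <-]]; last by [].
  by exists i.
move=> b; split=> [[/enumB [i <-]] | [i /eqP gi <-]]; rewrite preim_optK //.
by move/eqP; exists i.
Qed.

Lemma capcard_pigeonhole n n' : 0 < n' -> #|S| * n' <= n -> capcard n A = n ->
  exists s, capcard n' (fun a => A a /\ g a = s) = n'.
Proof.
move=> n'0 le_n An; apply: NNPP => none.
have small s : capcard n' (fun a => A a /\ g a = s) <= n'.-1.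
  have := capcard_le n' (fun a => A a /\ g a = s).
  by rewrite leq_eqVlt => /orP [/eqP eq_n'|]; [case: none; exists s | lia].
have S0 : 0 < #|S| by apply/card_gt0P; exists s0.
have sum_le : \sum_(s : S) capcard n (fun a => A a /\ g a = s) <= #|S| * n'.-1.
  rewrite -sum_nat_const; apply: leq_sum => s _.
  have lt : capcard n' (fun a => A a /\ g a = s) < n' by have := small s; lia.
  by rewrite (capcard_shrink lt) ?small //; nia.
have := capcard_partition g n A; rewrite An.
move: sum_le; have : #|S| * n'.-1 < #|S| * n' by rewrite ltn_pmul2l //; lia.
lia.
Qed.

(* By pigeonhole one colour class of [A] is full at [n']; it absorbs the part of
   [B] left over once the other classes are copied exactly. *)
Lemma recolour_full n n' : 0 < n' -> #|S| * n' <= n ->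
  capcard n A = n -> capcard n B = n -> exists f, recolours f n'.
Proof.
move=> n'0 le_n An Bn; have [s1 cs1] := capcard_pigeonhole n'0 le_n An.
have S0 : 0 < #|S| by apply/card_gt0P; exists s1.
pose c s := capcard n' (fun a => A a /\ g a = s).
have sum_le : \sum_(s | s != s1) c s <= n - n'.
  apply: (@leq_trans (\sum_(s | s != s1) n')); first by apply: leq_sum => s _; apply: capcard_le.
  by rewrite sum_nat_const cardC1; nia.
have [phi card_phi] := fill_classes (leq_trans sum_le (leq_subr _ _)).
have [eb [ib Bb]] := capcard_atleast n B; rewrite Bn in eb ib Bb *.
pose f b := if preim_opt eb b is Some i then phi i else s1.
have f_out b : (forall i, eb i <> b) -> f b = s1 by move=> nb; rewrite /f preim_optN.
have c_f b : 0 < c (f b).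
  rewrite /f; case: (preim_opt eb b) => [i|]; last by rewrite /c cs1.
  have := card_phi (phi i); case: eqP => [->|_ <-]; first by rewrite /c cs1.
  by apply/card_gt0P; exists i; rewrite inE /=.
exists f; split; first by move=> b _; have [a] := capcard_gt0_ex (c_f b); exists a.
move=> s; rewrite -/(c s); case: (eqVneq s s1) => [->|ne].
  rewrite /c cs1; apply/eqP; rewrite eqn_leq capcard_le /=.
  apply: capcard_ge => //.
  apply: (atleast_le _ (atleast_sub _ (atleast_image [pred i | phi i == s1] ib))).
    by have := card_phi s1; rewrite eqxx => ->; apply: leq_trans (leq_sub2l n sum_le); nia.
  by move=> b [i /eqP phi1 <-]; rewrite /f preim_optK.
rewrite (capcard_image (J := [pred i | phi i == s]) n' ib).
  by have := card_phi s; rewrite (negbTE ne) => ->; apply/minn_idPr; apply: capcard_le.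
move=> b; split=> [[_ fb] | [i /eqP phis <-]]; last by rewrite /f preim_optK.
case: (asboolP (exists i, eb i = b)) => [[i ei] | nb]; last first.
  by move: fb ne; rewrite f_out => [->|i ei]; [rewrite eqxx | apply: nb; exists i].
by exists i => //; move: fb; rewrite -ei /f preim_optK //= => ->.
Qed.

Lemma recolour n n' : 0 < n' -> #|S| * n' <= n -> capcard n A = capcard n B ->
  exists f, recolours f n'.
Proof.
move=> n'0 le_n AB; case: (ltnP (capcard n B) n) => [lt | ge]; first exact: recolour_enum AB lt.
have Bn : capcard n B = n by apply/eqP; rewrite eqn_leq capcard_le.
by apply: (recolour_full n'0 le_n); rewrite ?AB.
Qed.

End Recolouring.

(** * Trees *)

Lemma lstruct_p_gt0 p (t : lstruct p) : 0 < p.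
Proof. by case: p t => // t; case: (lab t (root t)). Qed.

Section Reach.
Variables (p : nat) (t : lstruct p).

Lemma reach_trans k j u y z : reach t k u y -> reach t j y z -> reach t (k + j) u z.
Proof. by elim=> [//|{}k a b c ab _ IH] /IH; rewrite addSn; exact: reachS ab. Qed.

Lemma reach1 u z : E t u z -> reach t 1 u z.
Proof. by move=> uz; apply: reachS uz _; apply: reach0. Qed.

Lemma reach0_inv u z : reach t 0 u z -> u = z.
Proof. by move=> r; inversion r. Qed.

Lemma reachS_inv k u z : reach t k.+1 u z -> exists2 w, E t u w & reach t k w z.
Proof. by move=> r; inversion r as [|k' a w b uw wz]; exists w. Qed.

Lemma reach_split k j u z : reach t (k + j) u z -> exists2 y, reach t k u y & reach t j y z.
Proof.
elim: k u => [|k IH] u; first by exists u => //; apply: reach0.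
rewrite addSn => /reachS_inv [w uw /IH [y wy yz]].
by exists y => //; apply: reachS uw wy.
Qed.

Lemma reachS_last k u z : reach t k.+1 u z -> exists2 y, reach t k u y & E t y z.
Proof.
rewrite -addn1 => /reach_split [y uy /reachS_inv [w yw /reach0_inv <-]].
by exists y.
Qed.

Definition below h (w z : V t) := exists2 k, k <= h & reach t k w z.

Lemma below_refl h w : below h w w.
Proof. by exists 0 => //; apply: reach0. Qed.

Lemma below_child h w w' z : E t w w' -> below h w' z -> below h.+1 w z.
Proof. by move=> ww' [k kh w'z]; exists k.+1 => //; apply: reachS ww' w'z. Qed.

Lemma below_step h w z : below h.+1 w z -> z = w \/ exists2 w', E t w w' & below h w' z.
Proof.
move=> [[|k] kh wz]; first by left; apply/esym/reach0_inv.
by have [w' ww' w'z] := reachS_inv wz; right; exists w' => //; exists k.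
Qed.

Lemma below0 w z : below 0 w z -> z = w.
Proof. by move=> [k]; rewrite leqn0 => /eqP-> /reach0_inv. Qed.

Variable d : nat.
Hypothesis t_tree : in_T d t.

Lemma parent_uniq a b z : E t a z -> E t b z -> a = b.
Proof.
case: t_tree => [no_parent [parent _]] az bz.
have zr : z <> root t by move=> zr; rewrite zr in az; apply: (no_parent _ az).
by have [u [_ uniq_u]] := parent _ zr; rewrite (uniq_u _ az) (uniq_u _ bz).
Qed.

Lemma ancestor_uniq k x y z : reach t k x z -> reach t k y z -> x = y.
Proof.
elim: k z => [|k IH] z; first by move=> /reach0_inv -> /reach0_inv ->.
move=> /reachS_last [a xa az] /reachS_last [b yb bz].
by move: yb; rewrite -(parent_uniq az bz); apply: IH xa.
Qed.

Lemma reach_root_root k : reach t k (root t) (root t) -> k = 0.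
Proof.
case: k => // k /reachS_last [y _ yr].
by case: t_tree => [no_parent _]; case: (no_parent _ yr).
Qed.

Lemma depth_uniq a b z : reach t a (root t) z -> reach t b (root t) z -> a = b.
Proof.
wlog ab : a b / a <= b => [wlog_ab|].
  by case: (leqP a b) => [|/ltnW] ?; [apply: wlog_ab | move=> ra rb; apply/esym/wlog_ab].
rewrite -(subnK ab) => ra /reach_split [y ry yz].
by move: ry; rewrite (ancestor_uniq yz ra) => /reach_root_root ->.
Qed.

Lemma depth_exists z : exists2 k, k <= d & reach t k (root t) z.
Proof. by case: t_tree => [_ [_ depth]]; have [k []] := depth z; exists k. Qed.

Lemma below_root z : below d (root t) z.
Proof. by have [k kd r] := depth_exists z; exists k. Qed.

Lemma child_depth k w z : reach t k (root t) w -> E t w z -> k < d.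
Proof.
move=> rw wz; have [k' k'd rz] := depth_exists z.
by have := depth_uniq rz (reach_trans rw (reach1 wz)); lia.
Qed.

Lemma parent_not_below h v v' : E t v v' -> ~ below h v' v.
Proof.
move=> vv' [k _ v'v]; have [a _ ra] := depth_exists v.
by have := depth_uniq ra (reach_trans ra (reachS vv' v'v)); lia.
Qed.

Lemma below_children_disj h v v1 v2 z :
  E t v v1 -> E t v v2 -> below h v1 z -> below h v2 z -> v1 = v2.
Proof.
move=> vv1 vv2 [k1 _ r1] [k2 _ r2]; have [a _ ra] := depth_exists v.
have := depth_uniq (reach_trans ra (reachS vv1 r1)) (reach_trans ra (reachS vv2 r2)).
by move=> /addnI [k12]; move: r1; rewrite k12 => /ancestor_uniq; apply.
Qed.

End Reach.

(** * Threshold types *)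

Section Types.
Variable K : finType.

(* The count of children of each [h-1]-type is stored capped at [th (h-1)]. *)
Fixpoint htype (th : nat -> nat) (h : nat) : finType :=
  if h is h'.+1 then (K * {ffun htype th h' -> 'I_(th h').+1})%type else K.

Definition type_colour th h : htype th h -> K :=
  if h is h'.+1 then fun s => s.1 else id.

Definition type_count th h (s : htype th h.+1) (x : htype th h) : nat := s.2 x.

Lemma card_htypeS th h : #|htype th h.+1| = #|K| * (th h).+1 ^ #|htype th h|.
Proof. by rewrite /= card_prod card_ffun card_ord. Qed.

Lemma card_htype_gt0 th h : 0 < #|K| -> 0 < #|htype th h|.
Proof. by case: h => // h K0; rewrite card_htypeS muln_gt0 K0 expn_gt0. Qed.

Variable p : nat.

Fixpoint type_of (t : lstruct p) (c : V t -> K) th h {struct h} : V t -> htype th h :=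
  if h is h'.+1 then fun w =>
    (c w, [ffun x => inord (capcard (th h') (fun z => E t w z /\ type_of c th h' z = x))])
  else c.

Lemma type_colourE t c th h w : type_colour (@type_of t c th h w) = c w.
Proof. by case: h. Qed.

Lemma type_countE t c th h w x :
  type_count (@type_of t c th h.+1 w) x =
  capcard (th h) (fun z => E t w z /\ type_of c th h z = x).
Proof. by rewrite /type_count ffunE inordK // ltnS capcard_le. Qed.

Lemma type_ofS_eqP t1 t2 c1 c2 th h w1 w2 :
  @type_of t1 c1 th h.+1 w1 = @type_of t2 c2 th h.+1 w2 <->
  c1 w1 = c2 w2 /\
  forall x, capcard (th h) (fun z => E t1 w1 z /\ type_of c1 th h z = x) =
            capcard (th h) (fun z => E t2 w2 z /\ type_of c2 th h z = x).
Proof.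
split=> [eq12 | [c12 eq_count]].
  by split=> [|x]; [have := congr1 (@type_colour th h.+1) eq12 | rewrite -!type_countE eq12].
by rewrite /= c12; congr pair; apply/ffunP => x; rewrite !ffunE eq_count.
Qed.

Lemma eq_type_of_below t c c' th h w :
  (forall z, below h w z -> c z = c' z) -> @type_of t c th h w = type_of c' th h w.
Proof.
elim: h w => [|h IH] w cc' /=; first by apply: cc'; apply: below_refl.
rewrite cc'; last exact: below_refl.
congr pair; apply/ffunP => x; rewrite !ffunE; congr inord; apply: eq_capcard => z.
have eq_z : E t w z -> type_of c th h z = type_of c' th h z.
  by move=> wz; apply: IH => y /(below_child wz); apply: cc'.
by split=> -[wz <-]; rewrite (eq_z wz).
Qed.

Lemma type_of_child t1 t2 c1 c2 th h w1 w2 z1 : 0 < th h ->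
  @type_of t1 c1 th h.+1 w1 = @type_of t2 c2 th h.+1 w2 -> E t1 w1 z1 ->
  exists2 z2, E t2 w2 z2 & type_of c2 th h z2 = type_of c1 th h z1.
Proof.
move=> th0 /type_ofS_eqP [_ eq_count] w1z1.
have : 0 < capcard (th h) (fun z => E t1 w1 z /\ type_of c1 th h z = type_of c1 th h z1).
  exact: (capcard_gt0 (a := z1)).
by rewrite eq_count => /capcard_gt0_ex [z2 [w2z2 eq_z2]]; exists z2.
Qed.

End Types.

Section SetMove.
Variables (K : finType) (p d : nat) (t1 t2 : lstruct p).
Hypothesis t2_tree : in_T d t2.
Variable U : K -> bool -> K.
Variables th th' : nat -> nat.
Hypothesis th_large : forall h, #|htype K th' h| * th' h <= th h.
Hypothesis th'_gt0 : forall h, 0 < th' h.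

Definition mark (t : lstruct p) (c : V t -> K) (X : V t -> Prop) z := U (c z) (asbool (X z)).

Definition glue (v : V t2) (b : Prop) h (Y : V t2 -> V t2 -> Prop) z :=
  (z = v /\ b) \/ exists2 v', E t2 v v' & below h v' z /\ Y v' z.

Lemma mark_glue_root c v b h Y : mark c (glue v b h Y) v = U (c v) (asbool b).
Proof.
congr U; apply: eq_asbool; split=> [[[_ //] | [v' vv' [v'v _]]] | ]; last by left.
by case: (parent_not_below t2_tree vv' v'v).
Qed.

Lemma type_of_glue c v b h Y v' : E t2 v v' ->
  type_of (mark c (glue v b h Y)) th' h v' = type_of (mark c (Y v')) th' h v'.
Proof.
move=> vv'; apply: eq_type_of_below => z v'z; congr U; apply: eq_asbool.
split=> [[[zv _] | [v'' vv'' [v''z Yz]]] | Yz]; last by right; exists v'.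
  by rewrite zv in v'z; case: (parent_not_below t2_tree vv' v'z).
by rewrite (below_children_disj t2_tree vv' vv'' v'z v''z).
Qed.

(* The response below [v] is glued from inductive responses on the children of
   [v], each matched by [recolour] with a child of [u] of the same type. *)
Lemma type_set_move (c1 : V t1 -> K) (c2 : V t2 -> K) h u v :
  type_of c1 th h u = type_of c2 th h v -> forall X, exists X',
    type_of (mark c1 X) th' h u = type_of (mark c2 X') th' h v.
Proof.
elim: h u v => [|h IH] u v uv X; first by exists (fun _ => X u); move: uv; rewrite /= /mark => ->.
have [c12 eq_count] := proj1 (type_ofS_eqP _ _ _ _ _ _) uv.
pose g z := type_of (mark c1 X) th' h z.
pose A τ z := E t1 u z /\ type_of c1 th h z = τ.
pose B τ z := E t2 v z /\ type_of c2 th h z = τ.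
have [F recF] : exists F, forall τ, recolours (A τ) (B τ) g (F τ) (th' h).
  apply: (choice (fun τ f => recolours (A τ) (B τ) g f (th' h))) => τ.
  exact: (recolour (g u) g (th'_gt0 h) (th_large h) (eq_count τ)).
pose f z := F (type_of c2 th h z) z.
have [Y f_Y] : exists Y, forall v', E t2 v v' -> f v' = type_of (mark c2 (Y v')) th' h v'.
  apply: (choice (fun v' Y => E t2 v v' -> f v' = type_of (mark c2 Y) th' h v')) => v'.
  case: (asboolP (E t2 v v')) => [vv' | nvv']; last by exists (fun _ => False).
  rewrite /f; have [a [[ua a_v'] <-]] := (recF _).1 v' (conj vv' erefl).
  by have [Y a_Y] := IH _ _ a_v' X; exists Y.
exists (glue v (X u) h Y); apply/type_ofS_eqP; split; first by rewrite mark_glue_root /mark c12.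
move=> σ; rewrite (capcard_partition (type_of c1 th h)) (capcard_partition (type_of c2 th h)).
congr minn; apply: eq_bigr => τ _.
rewrite (eq_capcard _ (B := fun z => A τ z /\ g z = σ)); last by move=> z; rewrite /A; tauto.
rewrite -(recF τ).2; apply: eq_capcard => z.
have glue_f : E t2 v z -> type_of (mark c2 (glue v (X u) h Y)) th' h z = f z.
  by move=> vz; rewrite type_of_glue // -f_Y.
split=> [[[vz τz] Fz] | [[vz gz] τz]]; first by rewrite glue_f // /f τz.
by move: gz; rewrite glue_f // /f τz.
Qed.

End SetMove.

Section Singletons.
Variables (K : finType) (marked : K -> bool) (th : nat -> nat).

Fixpoint unmarked h : htype K th h -> Prop :=
  if h is h'.+1 then fun s =>
    ~~ marked s.1 /\ forall x, 0 < type_count s x -> unmarked x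
  else fun s => ~~ marked s.

Fixpoint one_marked h : htype K th h -> Prop :=
  if h is h'.+1 then fun s =>
    if marked s.1 then forall x, 0 < type_count s x -> unmarked x
    else exists x0, [/\ type_count s x0 = 1, one_marked x0 &
                        forall x, 0 < type_count s x -> x <> x0 -> unmarked x]
  else fun s => marked s.

Variables (p d : nat) (t : lstruct p).
Hypothesis t_tree : in_T d t.
Hypothesis th_gt1 : forall h, 1 < th h.
Variable c : V t -> K.

Lemma type_count_gt0 h w x :
  0 < type_count (type_of c th h.+1 w) x <-> exists2 w', E t w w' & type_of c th h w' = x.
Proof.
rewrite type_countE; split=> [/capcard_gt0_ex [w' []] | [w' ww' <-]]; first by exists w'.
by apply: (capcard_gt0 (a := w')); [apply: ltnW | split].
Qed.

Lemma type_count_eq1 h w x : type_count (type_of c th h.+1 w) x = 1 <->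
  (exists2 w', E t w w' & type_of c th h w' = x) /\
  (forall w1 w2, E t w w1 -> type_of c th h w1 = x ->
                 E t w w2 -> type_of c th h w2 = x -> w1 = w2).
Proof.
rewrite type_countE; split=> [eq1 | [[w' ww' w'x] uniq_x]].
  split=> [|w1 w2 ww1 w1x ww2 w2x].
    have : 0 < capcard (th h) (fun z => E t w z /\ type_of c th h z = x) by rewrite eq1.
    by move=> /capcard_gt0_ex [w' [ww' w'x]]; exists w'.
  apply: NNPP => w12.
  have two : atleast 2 (fun z => E t w z /\ type_of c th h z = x).
    exists (fun i : 'I_2 => if val i == 0 then w1 else w2); split; last by case=> [[|]].
    move=> [[|[|i]] ?] // [[|[|j]] ?] //= e12; try by apply: ord_inj.
    by case: w12; rewrite e12.
  have lt : capcard (th h) (fun z => E t w z /\ type_of c th h z = x) < th h by rewrite eq1.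
  by have := capcard_lt_atleast lt two; rewrite eq1.
apply: capcard_eq; [exact: ltnW | exact: atleast1 (conj ww' w'x) |].
move=> _ [e [inj_e xe]]; have [ww0 e0x] := xe ord0; have [ww1 e1x] := xe ord_max.
by have := inj_e _ _ (uniq_x _ _ ww0 e0x ww1 e1x).
Qed.

Lemma unmarked_typeP h w : unmarked (type_of c th h w) <-> forall z, below h w z -> ~~ marked (c z).
Proof.
elim: h w => [|h IH] w /=; first by split=> [mw z /below0 -> | ]; [|apply; apply: below_refl].
split=> [[mw unmarked_kids] z /below_step [-> //| [w' ww' w'z]] | unmarked_below].
  by apply: (proj1 (IH w')) w'z; apply: unmarked_kids; apply/type_count_gt0; exists w'.
split; first by apply: unmarked_below; apply: below_refl.
move=> x /type_count_gt0 [w' ww' <-]; apply/IH => z w'z.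
by apply: unmarked_below; apply: below_child ww' w'z.
Qed.

Definition unique_marked_below h w :=
  exists z, [/\ below h w z, marked (c z) & forall z', below h w z' -> marked (c z') -> z' = z].

Lemma unique_marked_below_root h w : marked (c w) ->
  unique_marked_below h.+1 w <-> forall x, 0 < type_count (type_of c th h.+1 w) x -> unmarked x.
Proof.
move=> mw; split=> [[z [wz mz uniq_z]] x /type_count_gt0 [w' ww' <-] | unmarked_kids].
  apply/unmarked_typeP => z' w'z'; apply/negP => mz'.
  have z'z := uniq_z _ (below_child ww' w'z') mz'.
  have wz' : w = z' by rewrite z'z (uniq_z _ (below_refl _ _) mw).
  by rewrite -wz' in w'z'; apply: (parent_not_below t_tree ww' w'z').
exists w; split=> [||z /below_step [//| [w' ww' w'z]] mz]; [exact: below_refl | exact: mw |].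
have : 0 < type_count (type_of c th h.+1 w) (type_of c th h w') by apply/type_count_gt0; exists w'.
by move=> /unmarked_kids /unmarked_typeP /(_ _ w'z); rewrite mz.
Qed.

Lemma one_marked_typeP h w : one_marked (type_of c th h w) <-> unique_marked_below h w.
Proof.
elim: h w => [|h IH] w /=.
  split=> [mw | [z [/below0 -> //]]].
  by exists w; split=> [||z /below0 ->] //; apply: below_refl.
case: ifPn => [mw | nmw]; first by rewrite unique_marked_below_root.
split.
- move=> [x0 [/type_count_eq1 [[w0 ww0 w0x0] uniq_x0] x0_one unmarked_others]].
  rewrite -w0x0 in x0_one; have [z [w0z mz uniq_z]] := proj1 (IH w0) x0_one.
  exists z; split=> [||z' /below_step [-> | [w' ww' w'z']] mz']; first exact: below_child ww0 w0z.
  + exact: mz.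
  + by rewrite mz' in nmw.
  case: (eqVneq (type_of c th h w') x0) => [w'x0 | w'x0].
    by rewrite (uniq_x0 _ _ ww' w'x0 ww0 w0x0) in w'z'; apply: uniq_z.
  have : 0 < type_count (type_of c th h.+1 w) (type_of c th h w') by apply/type_count_gt0; exists w'.
  by move=> /unmarked_others /(_ (elimN eqP w'x0)) /unmarked_typeP /(_ _ w'z'); rewrite mz'.
- move=> [z [wz mz uniq_z]].
  have [zw | [w0 ww0 w0z]] := below_step wz; first by rewrite -zw mz in nmw.
  have uniq_w0 w1 : E t w w1 -> type_of c th h w1 = type_of c th h w0 -> w1 = w0.
    move=> ww1 w1w0; have /IH [z1 [w1z1 mz1 _]] : one_marked (type_of c th h w1).
      rewrite w1w0; apply/IH; exists z; split=> // z' w0z' mz'.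
      by apply: uniq_z => //; apply: below_child ww0 w0z'.
    have z1z := uniq_z _ (below_child ww1 w1z1) mz1; rewrite z1z in w1z1.
    exact: (below_children_disj t_tree ww1 ww0 w1z1 w0z).
  exists (type_of c th h w0); split.
  + apply/type_count_eq1; split=> [|w1 w2 ww1 w1w0 ww2 w2w0]; first by exists w0.
    by rewrite (uniq_w0 _ ww1 w1w0) (uniq_w0 _ ww2 w2w0).
  + apply/IH; exists z; split=> // z' w0z' mz'; apply: uniq_z => //; apply: below_child ww0 w0z'.
  move=> x /type_count_gt0 [w' ww' <-] w'w0; apply/unmarked_typeP => z' w'z'; apply/negP => mz'.
  have := uniq_z _ (below_child ww' w'z') mz'; move=> z'z; rewrite z'z in w'z'.
  by case: w'w0; rewrite (below_children_disj t_tree ww' ww0 w'z' w0z).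
Qed.

End Singletons.

(** * Ehrenfeucht-Fraisse moves *)

Section Registers.
Variables (p m d : nat).

Definition colour : finType := ('I_p * {ffun 'I_m -> bool})%type.

Definition colouring (t : lstruct p) (regs : nat -> V t -> Prop) (w : V t) : colour :=
  (lab t w, [ffun i : 'I_m => asbool (regs i w)]).

(* The base [2] lets types recognise singletons; each step is the margin [recolour]
   needs for one set move in [type_set_move]. *)
Fixpoint threshold (r h : nat) : nat :=
  if r is r'.+1 then #|htype colour (threshold r') h| * threshold r' h else 2.

Definition same_type r (t1 t2 : lstruct p) regs1 regs2 :=
  type_of (@colouring t1 regs1) (threshold r) d (root t1) =
  type_of (@colouring t2 regs2) (threshold r) d (root t2).

Definition set_reg (T : Type) (regs : nat -> T -> Prop) j X :=
  fun i => if i == j then X else regs i.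

Definition set_bit j (col : colour) b : colour :=
  (col.1, [ffun i : 'I_m => if val i == j then b else col.2 i]).

Lemma colouring_set_reg t regs j X w :
  @colouring t (set_reg regs j X) w = set_bit j (colouring regs w) (asbool (X w)).
Proof. by congr pair; apply/ffunP => i; rewrite !ffunE /set_reg; case: eqP. Qed.

Lemma colouring_reg t regs j (jm : j < m) w :
  (@colouring t regs w).2 (Ordinal jm) = asbool (regs j w).
Proof. by rewrite ffunE. Qed.

Hypothesis p_gt0 : 0 < p.

Lemma card_colour_gt0 : 0 < #|colour|.
Proof. by rewrite card_prod card_ffun !card_ord card_bool muln_gt0 p_gt0 expn_gt0. Qed.

Lemma threshold_gt1 r h : 1 < threshold r h.
Proof.
elim: r => //= r IH; have := card_htype_gt0 (threshold r) h card_colour_gt0.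
by move: IH; set a := threshold r h; set b := #|_|; nia.
Qed.

Lemma threshold_gt0 r h : 0 < threshold r h.
Proof. exact: ltnW (threshold_gt1 r h). Qed.

End Registers.

Section Moves.
Variables (p m d : nat) (t1 t2 : lstruct p).
Hypotheses (t1_tree : in_T d t1) (t2_tree : in_T d t2).
Let p_gt0 := lstruct_p_gt0 t1.

Lemma same_type_set_move r (regs1 : nat -> V t1 -> Prop) (regs2 : nat -> V t2 -> Prop) j :
  same_type m d r.+1 regs1 regs2 ->
  forall X, exists X', same_type m d r (set_reg regs1 j X) (set_reg regs2 j X').
Proof.
move=> eq_type X.
have [X' eq_type'] :=
  type_set_move t2_tree (@set_bit p m j) (fun h => leqnn _) (threshold_gt0 m p_gt0 r) eq_type X.
exists X'; rewrite /same_type.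
rewrite (eq_type_of_below (c' := mark (@set_bit p m j) (colouring m regs1) X)); last first.
  by move=> z _; apply: colouring_set_reg.
by rewrite eq_type'; apply: eq_type_of_below => z _; rewrite colouring_set_reg.
Qed.

Lemma same_type_point_move r (regs1 : nat -> V t1 -> Prop) (regs2 : nat -> V t2 -> Prop) j :
  j < m -> same_type m d r.+1 regs1 regs2 ->
  forall v, exists v',
    same_type m d r (set_reg regs1 j (fun z => z = v)) (set_reg regs2 j (fun z => z = v')).
Proof.
move=> jm eq_type v; have [X' eq_type'] := same_type_set_move j eq_type (fun z => z = v).
pose in_j (col : colour p m) := col.2 (Ordinal jm).
have in_j_set t regs X z : in_j (@colouring p m t (set_reg regs j X) z) = asbool (X z).
  by rewrite /in_j colouring_reg /set_reg eqxx.
have : one_marked in_j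
    (type_of (colouring m (set_reg regs1 j (fun z => z = v))) (threshold p m r) d (root t1)).
  apply/(one_marked_typeP _ t1_tree (threshold_gt1 m p_gt0 r)).
  exists v; split; first exact: below_root.
    by rewrite in_j_set; apply/asboolP.
  by move=> z' _; rewrite in_j_set => /asboolP.
rewrite eq_type' => /(one_marked_typeP _ t2_tree (threshold_gt1 m p_gt0 r)) [v' [_ mv' uniq_v']].
exists v'; rewrite /same_type eq_type'; apply: eq_type_of_below => z _.
congr pair; apply/ffunP => i; rewrite !ffunE /set_reg; case: eqP => // _.
apply: eq_asbool; split=> [X'z | ->]; last by move: mv'; rewrite in_j_set => /asboolP.
by apply: uniq_v'; [apply: below_root | rewrite in_j_set; apply/asboolP].
Qed.

End Moves.

(** * Transfer of MSO formulas *)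

Section Atoms.
Variables (p m d : nat) (t1 t2 : lstruct p).
Hypothesis t1_tree : in_T d t1.
Variables (r : nat) (regs1 : nat -> V t1 -> Prop) (regs2 : nat -> V t2 -> Prop).
Variables (rho1 : nat -> V t1) (rho2 : nat -> V t2).
Hypothesis eq_type : same_type m d r regs1 regs2.
Let p_gt0 := lstruct_p_gt0 t1.

Definition in_reg (s : term) :=
  if s is TVar x then exists2 j, j < m &
    (forall z, regs1 j z <-> z = rho1 x) /\ (forall z, regs2 j z <-> z = rho2 x)
  else True.

Definition corresp k z1 z2 := [/\ reach t1 k (root t1) z1, reach t2 k (root t2) z2 &
  type_of (colouring m regs1) (threshold p m r) (d - k) z1 =
  type_of (colouring m regs2) (threshold p m r) (d - k) z2].

Lemma corresp_exists k z1 : reach t1 k (root t1) z1 -> exists z2, corresp k z1 z2.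
Proof.
elim: k z1 => [|k IH] z1.
  by move=> /reach0_inv <-; exists (root t2); split; rewrite ?subn0 //; apply: reach0.
move=> /[dup] r1 /reachS_last [y1 ry1 y1z1]; have [y2 [_ ry2 eq_y]] := IH _ ry1.
have kd := child_depth t1_tree ry1 y1z1.
rewrite (_ : d - k = (d - k.+1).+1) in eq_y; last by lia.
have [z2 y2z2 eq_z] := type_of_child (threshold_gt0 m p_gt0 _ _) eq_y y1z1.
exists z2; split => //; rewrite -addn1; exact: reach_trans ry2 (reach1 y2z2).
Qed.

Lemma corresp_colouring k z1 z2 : corresp k z1 z2 -> colouring m regs1 z1 = colouring m regs2 z2.
Proof.
by move=> [_ _ eq_z]; rewrite -(type_colourE _ (threshold p m r) (d - k)) eq_z type_colourE.
Qed.

Lemma colouring_eq_reg z1 z2 j : j < m ->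
  colouring m regs1 z1 = colouring m regs2 z2 -> (regs1 j z1 <-> regs2 j z2).
Proof.
move=> jm /(congr1 (fun col : colour p m => col.2 (Ordinal jm))); rewrite !colouring_reg.
by move=> eq_j; split=> ?; apply/asboolP; [rewrite -eq_j | rewrite eq_j]; apply/asboolP.
Qed.

Lemma in_reg_corresp s : in_reg s -> exists k, corresp k (teval rho1 s) (teval rho2 s).
Proof.
case: s => [x [j jm [reg1 reg2]] |] /=; last first.
  by exists 0; split; rewrite ?subn0 //; apply: reach0.
have [k _ rk] := depth_exists t1_tree (rho1 x); have [z2 cz] := corresp_exists rk.
have : regs2 j z2 by apply/(colouring_eq_reg jm (corresp_colouring cz)); apply/reg1.
by move=> /reg2 z2x; rewrite z2x in cz; exists k.
Qed.

Lemma lab_transfer s : in_reg s -> lab t1 (teval rho1 s) = lab t2 (teval rho2 s).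
Proof. by move=> /in_reg_corresp [k /corresp_colouring /(congr1 fst)]. Qed.

Lemma reg_transfer s j (S1 : V t1 -> Prop) (S2 : V t2 -> Prop) : in_reg s -> j < m ->
  (forall z, regs1 j z <-> S1 z) -> (forall z, regs2 j z <-> S2 z) ->
  S1 (teval rho1 s) -> S2 (teval rho2 s).
Proof.
move=> /in_reg_corresp [k /corresp_colouring eq_col] jm reg1 reg2 /reg1.
by move=> /(colouring_eq_reg jm eq_col) /reg2.
Qed.

Lemma root_transfer x : in_reg (TVar x) -> rho1 x = root t1 -> rho2 x = root t2.
Proof.
move=> /in_reg_corresp [k [/= r1 r2 _]] x_root; rewrite x_root in r1.
by move: r2; rewrite (reach_root_root t1_tree r1) => /reach0_inv.
Qed.

Lemma teval_eq_transfer s u : in_reg s -> in_reg u ->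
  teval rho1 s = teval rho1 u -> teval rho2 s = teval rho2 u.
Proof.
case: s => [x|]; case: u => [y|] //= in_s in_u.
- by have [j jm [reg1 reg2]] := in_u; apply: (reg_transfer (s := TVar x) in_s jm reg1 reg2).
- exact: root_transfer.
- by move=> /esym /(root_transfer in_u) ->.
Qed.

Lemma edge_transfer s u : in_reg s -> in_reg u ->
  E t1 (teval rho1 s) (teval rho1 u) -> E t2 (teval rho2 s) (teval rho2 u).
Proof.
move=> in_s in_u e1; have [k [r1 r2 eq_s]] := in_reg_corresp in_s.
have kd := child_depth t1_tree r1 e1.
rewrite (_ : d - k = (d - k.+1).+1) in eq_s; last by lia.
have [w' e2 eq_w] := type_of_child (threshold_gt0 m p_gt0 _ _) eq_s e1.
case: u in_u e1 eq_w => [y [j jm [reg1 reg2]] | _ e1] /=; last first.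
  by case: t1_tree => [no_parent _]; case: (no_parent _ e1).
move=> _ eq_w; have : colouring m regs1 (rho1 y) = colouring m regs2 w'.
  by rewrite -(type_colourE _ (threshold p m r) (d - k.+1) (rho1 y)) -eq_w type_colourE.
by move=> /(colouring_eq_reg jm) [+ _] => /(_ (proj2 (reg1 _) erefl)) /reg2 <-.
Qed.

End Atoms.

Section Transfer.
Variables (p m d : nat) (t1 t2 : lstruct p).
Hypotheses (t1_tree : in_T d t1) (t2_tree : in_T d t2).
Let p_gt0 := lstruct_p_gt0 t1.

(* The registers from [m - r] on stay free for the [r] quantifiers still to come. *)
Definition in_regs r (regs1 : nat -> V t1 -> Prop) (regs2 : nat -> V t2 -> Prop)
    (val1 : nat -> V t1 -> Prop) (val2 : nat -> V t2 -> Prop) (pi : nat -> nat) (l : seq nat) :=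
  forall x, x \in l -> [/\ pi x < m - r, forall z, regs1 (pi x) z <-> val1 x z
                                       & forall z, regs2 (pi x) z <-> val2 x z].

Section InRegs.
Variables (r : nat) (regs1 : nat -> V t1 -> Prop) (regs2 : nat -> V t2 -> Prop).
Variables (val1 : nat -> V t1 -> Prop) (val2 : nat -> V t2 -> Prop) (pi : nat -> nat).

Lemma in_regs_sub l l' : {subset l <= l'} ->
  in_regs r regs1 regs2 val1 val2 pi l' -> in_regs r regs1 regs2 val1 val2 pi l.
Proof. by move=> ll' inl' x /ll'; apply: inl'. Qed.

Lemma in_regs_catl l l' :
  in_regs r regs1 regs2 val1 val2 pi (l ++ l') -> in_regs r regs1 regs2 val1 val2 pi l.
Proof. by apply: in_regs_sub => x xl; rewrite mem_cat xl. Qed.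

Lemma in_regs_catr l l' :
  in_regs r regs1 regs2 val1 val2 pi (l ++ l') -> in_regs r regs1 regs2 val1 val2 pi l'.
Proof. by apply: in_regs_sub => x xl; rewrite mem_cat xl orbT. Qed.

Lemma in_regs_set_reg l X1 X2 : in_regs r.+1 regs1 regs2 val1 val2 pi l ->
  in_regs r (set_reg regs1 (m - r.+1) X1) (set_reg regs2 (m - r.+1) X2) val1 val2 pi l.
Proof.
move=> inl x /inl [lt reg1 reg2]; rewrite /set_reg.
have -> : (pi x == m - r.+1) = false by apply/eqP; lia.
by split=> //; lia.
Qed.

Lemma in_regs_bind l x val1' val2' X1 X2 : r < m ->
  in_regs r.+1 regs1 regs2 val1 val2 pi [seq y <- l | y != x] ->
  (forall z, val1' x z <-> X1 z) -> (forall z, val2' x z <-> X2 z) ->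
  (forall y, y != x -> val1' y = val1 y /\ val2' y = val2 y) ->
  in_regs r (set_reg regs1 (m - r.+1) X1) (set_reg regs2 (m - r.+1) X2) val1' val2'
    (fun y => if y == x then m - r.+1 else pi y) l.
Proof.
move=> rm inl val1x val2x val'_y y yl; case: eqVneq => [-> | yx].
  by split; [lia | move=> z; rewrite /set_reg eqxx val1x | move=> z; rewrite /set_reg eqxx val2x].
have [-> ->] := val'_y _ yx.
by have := in_regs_set_reg X1 X2 inl; apply; rewrite mem_filter yx.
Qed.

End InRegs.

Lemma in_regs_in_reg r regs1 regs2 rho1 rho2 pi s :
  in_regs r regs1 regs2 (fun x z => z = rho1 x) (fun x z => z = rho2 x) pi (tvars s) ->
  in_reg m regs1 regs2 rho1 rho2 s /\ in_reg m regs2 regs1 rho2 rho1 s.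
Proof.
case: s => [x|] // ins; have [lt reg1 reg2] := ins x (mem_head _ _).
by split; exists (pi x) => //; lia.
Qed.

Definition transfers (f : formula p) := forall r, qrank f <= r -> r <= m ->
  forall regs1 regs2 rho1 rho2 sig1 sig2 piP piS,
  same_type m d r regs1 regs2 ->
  in_regs r regs1 regs2 (fun x z => z = rho1 x) (fun x z => z = rho2 x) piP (fv1 f) ->
  in_regs r regs1 regs2 sig1 sig2 piS (fvS f) ->
  (sat rho1 sig1 f <-> sat rho2 sig2 f).

Lemma transfers_FE s u : transfers (FE s u).
Proof.
move=> r _ _ regs1 regs2 rho1 rho2 sig1 sig2 piP piS eq_type inP _ /=.
have [s1 s2] := in_regs_in_reg (in_regs_catl inP).
have [u1 u2] := in_regs_in_reg (in_regs_catr inP).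
split; first exact: (edge_transfer t1_tree eq_type s1 u1).
exact: (edge_transfer t2_tree (esym eq_type) s2 u2).
Qed.

Lemma transfers_FEq s u : transfers (FEq s u).
Proof.
move=> r _ _ regs1 regs2 rho1 rho2 sig1 sig2 piP piS eq_type inP _ /=.
have [s1 s2] := in_regs_in_reg (in_regs_catl inP).
have [u1 u2] := in_regs_in_reg (in_regs_catr inP).
split; first exact: (teval_eq_transfer t1_tree eq_type s1 u1).
exact: (teval_eq_transfer t2_tree (esym eq_type) s2 u2).
Qed.

Lemma transfers_FP i s : transfers (FP i s).
Proof.
move=> r _ _ regs1 regs2 rho1 rho2 sig1 sig2 piP piS eq_type inP _ /=.
by have [s1 _] := in_regs_in_reg inP; rewrite (lab_transfer t1_tree eq_type s1).
Qed.

Lemma transfers_FIn s X : transfers (FIn s X).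
Proof.
move=> r _ _ regs1 regs2 rho1 rho2 sig1 sig2 piP piS eq_type inP inS /=.
have [s1 s2] := in_regs_in_reg inP; have [lt reg1 reg2] := inS X (mem_head _ _).
have jm : piS X < m by lia.
split; first exact: (reg_transfer t1_tree eq_type s1 jm reg1 reg2).
exact: (reg_transfer t2_tree (esym eq_type) s2 jm reg2 reg1).
Qed.

Lemma transfers_FEx1 x g : transfers g -> transfers (FEx1 x g).
Proof.
move=> IH [|r] //= qr rm regs1 regs2 rho1 rho2 sig1 sig2 piP piS eq_type inP inS.
have jm : m - r.+1 < m by lia.
have IHv v1 v2 : same_type m d r (set_reg regs1 (m - r.+1) (fun z => z = v1))
                                 (set_reg regs2 (m - r.+1) (fun z => z = v2)) ->
    (sat (fun y => if y == x then v1 else rho1 y) sig1 g <->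
     sat (fun y => if y == x then v2 else rho2 y) sig2 g).
  move=> eq_type'; apply: (IH r qr (ltnW rm) _ _ _ _ _ _ _ _ eq_type').
    apply: in_regs_bind inP _ _ _ => // [z | z | y yx]; rewrite ?eqxx //.
    by rewrite (negbTE yx).
  exact: (in_regs_set_reg _ _ inS).
split=> [[v1 sat1] | [v2 sat2]].
  have [v2 eq_type'] := same_type_point_move t1_tree t2_tree jm eq_type v1.
  by exists v2; apply/(IHv _ _ eq_type').
have [v1 eq_type'] := same_type_point_move t2_tree t1_tree jm (esym eq_type) v2.
by exists v1; apply/(IHv _ _ (esym eq_type')).
Qed.

Lemma transfers_FExS X g : transfers g -> transfers (FExS X g).
Proof.
move=> IH [|r] //= qr rm regs1 regs2 rho1 rho2 sig1 sig2 piP piS eq_type inP inS.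
have IHS S1 S2 : same_type m d r (set_reg regs1 (m - r.+1) S1) (set_reg regs2 (m - r.+1) S2) ->
    (sat rho1 (fun Y => if Y == X then S1 else sig1 Y) g <->
     sat rho2 (fun Y => if Y == X then S2 else sig2 Y) g).
  move=> eq_type'; apply: (IH r qr (ltnW rm) _ _ _ _ _ _ _ _ eq_type').
    exact: (in_regs_set_reg _ _ inP).
  apply: in_regs_bind inS _ _ _ => // [z | z | Y YX]; rewrite ?eqxx //.
  by rewrite (negbTE YX).
split=> [[S1 sat1] | [S2 sat2]].
  have [S2 eq_type'] := same_type_set_move t2_tree (m - r.+1) eq_type S1.
  by exists S2; apply/(IHS _ _ eq_type').
have [S1 eq_type'] := same_type_set_move t1_tree (m - r.+1) (esym eq_type) S2.
by exists S1; apply/(IHS _ _ (esym eq_type')).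
Qed.

Lemma sat_transfer (f : formula p) : transfers f.
Proof.
elim: f => [s u|s u|i s|s X|g IH|g1 IH1 g2 IH2|x g IH|X g IH].
- exact: transfers_FE.
- exact: transfers_FEq.
- exact: transfers_FP.
- exact: transfers_FIn.
- move=> r qr rm regs1 regs2 rho1 rho2 sig1 sig2 piP piS eq_type inP inS /=.
  by rewrite (IH r qr rm _ _ _ _ _ _ _ _ eq_type inP inS).
- move=> r /= qr rm regs1 regs2 rho1 rho2 sig1 sig2 piP piS eq_type inP inS.
  move: qr; rewrite geq_max => /andP [qr1 qr2].
  rewrite (IH1 r qr1 rm _ _ _ _ _ _ _ _ eq_type (in_regs_catl inP) (in_regs_catl inS)).
  by rewrite (IH2 r qr2 rm _ _ _ _ _ _ _ _ eq_type (in_regs_catr inP) (in_regs_catr inS)).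
- exact: transfers_FEx1.
- exact: transfers_FExS.
Qed.

Lemma same_type_mso_equiv :
  same_type m d m (fun _ (_ : V t1) => False) (fun _ (_ : V t2) => False) -> mso_equiv m t1 t2.
Proof.
move=> eq_type f [fv1_nil fvS_nil] qf.
by apply: (sat_transfer qf (leqnn m) eq_type (piP := id) (piS := id)); rewrite ?fv1_nil ?fvS_nil.
Qed.

End Transfer.

(** * Pruning *)

(* Nodes carry no decidable equality, so lists of nodes are searched with [List.In]. *)
Lemma In_flatten (T : Type) (w : T) (ss : seq (seq T)) :
  List.In w (flatten ss) <-> exists2 s, List.In s ss & List.In w s.
Proof.
elim: ss => [|s ss IH] /=; first by split=> // [[]].
rewrite List.in_app_iff IH; split=> [[ws | [s' ss' ws']] | [s' [<- | ss'] ws']].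
- by exists s; [left |].
- by exists s'; [right |].
- by left.
- by right; exists s'.
Qed.

Lemma In_map (A B : Type) (f : A -> B) (l : seq A) y :
  List.In y (map f l) <-> exists2 x, List.In x l & f x = y.
Proof. by rewrite List.in_map_iff; split=> [[x [<- ?]] | [x ? <-]]; exists x. Qed.

Lemma In_mem (T : eqType) (x : T) (s : seq T) : List.In x s <-> x \in s.
Proof.
elim: s => [|y s IH] //=; rewrite inE IH.
by split=> [[->|->] | /orP [/eqP ->|]]; rewrite ?eqxx ?orbT; auto.
Qed.

Lemma size_flatten_le (I T : Type) (s : seq I) (f : I -> seq T) b :
  (forall x, List.In x s -> size (f x) <= b) -> size (flatten (map f s)) <= size s * b.
Proof.
elim: s => [|x s IH] //= fb; rewrite size_cat mulSn leq_add ?fb //; first by left.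
by apply: IH => y ys; apply: fb; right.
Qed.

Lemma In_pmap_insub (T : Type) (P : pred T) (l : seq T) (x : {y | P y}) :
  List.In (val x) l -> List.In x (pmap insub l).
Proof.
elim: l => [|a l IH] //= [ax | xl]; last by case: insub => [y|] /=; [right|]; apply: IH.
by rewrite ax valK /=; left.
Qed.

Section Prune.
Variables (p m d : nat) (t : lstruct p).
Hypothesis t_tree : in_T d t.
Let p_gt0 := lstruct_p_gt0 t.

Local Notation thr := (threshold p m m).
Local Notation ty h := (type_of (colouring m (fun _ (_ : V t) => False)) thr h).

Lemma selection_exists h v : exists l : seq (V t),
  [/\ forall w, List.In w l -> E t v w, size l <= #|htype (colour p m) thr h| * thr h &
      forall τ, capcard (thr h) (fun w => List.In w l /\ ty h w = τ) =
                capcard (thr h) (fun w => E t v w /\ ty h w = τ)].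
Proof.
pose A τ w := E t v w /\ ty h w = τ.
pose F τ := sval (constructive_indefinite_description _ (capcard_atleast (thr h) (A τ))).
have F_enum τ : injective (F τ) /\ forall i, A τ (F τ i).
  exact: svalP (constructive_indefinite_description _ (capcard_atleast (thr h) (A τ))).
pose l := flatten [seq map (F τ) (enum 'I_(capcard (thr h) (A τ)))
                  | τ <- enum (htype (colour p m) thr h)].
have in_l w : List.In w l <-> exists τ i, F τ i = w.
  rewrite In_flatten; split=> [[_ /In_map [τ _ <-] /In_map [i _ <-]] | [τ [i <-]]]; first by exists τ, i.
  exists (map (F τ) (enum 'I_(capcard (thr h) (A τ)))); apply/In_map; [exists τ | exists i] => //.
    by apply/In_mem; rewrite mem_enum.
  by apply/In_mem; rewrite mem_enum.
exists l; split.
- by move=> w /in_l [τ [i <-]]; case: ((F_enum τ).2 i).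
- apply: leq_trans (size_flatten_le (b := thr h) _) _; last by rewrite -cardT.
  by move=> τ _; rewrite size_map size_enum_ord capcard_le.
move=> τ; rewrite (capcard_image (thr h) (J := predT) (F_enum τ).1); last first.
  move=> w; split=> [[/in_l [τ' [i <-]] ty_i] | [i _ <-]]; last first.
    by split; [apply/in_l; exists τ, i | case: ((F_enum τ).2 i)].
  by have [_ ty_i'] := (F_enum τ').2 i; move: ty_i; rewrite ty_i' => <-; exists i.
by rewrite card_ord; apply/minn_idPr; apply: capcard_le.
Qed.

Definition selected h v : seq (V t) :=
  sval (constructive_indefinite_description _ (selection_exists h v)).

Lemma selectedP h v :
  [/\ forall w, List.In w (selected h v) -> E t v w,
      size (selected h v) <= #|htype (colour p m) thr h| * thr h &
      forall τ, capcard (thr h) (fun w => List.In w (selected h v) /\ ty h w = τ) =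
                capcard (thr h) (fun w => E t v w /\ ty h w = τ)].
Proof. exact: svalP (constructive_indefinite_description _ (selection_exists h v)). Qed.

Lemma selected_child h v w : List.In w (selected h v) -> E t v w.
Proof. by case: (selectedP h v) => + _ _; apply. Qed.

Fixpoint kept_at k w : Prop :=
  if k is k'.+1 then exists2 v, kept_at k' v & List.In w (selected (d - k'.+1) v)
  else w = root t.

Definition kept w := exists k, kept_at k w.

Lemma kept_at_reach k w : kept_at k w -> reach t k (root t) w.
Proof.
elim: k w => [|k IH] w /=; first by move=> ->; apply: reach0.
by move=> [v /IH rv /selected_child vw]; rewrite -addn1; apply: reach_trans rv (reach1 vw).
Qed.

Lemma kept_at_le k w : kept_at k w -> k <= d.
Proof.
move=> /kept_at_reach rw; have [k' k'd rw'] := depth_exists t_tree w.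
by rewrite (depth_uniq t_tree rw rw').
Qed.

Lemma kept_root : asbool (kept (root t)).
Proof. by apply/asboolP; exists 0. Qed.

Definition pruned : lstruct p := LStruct {w | asbool (kept w)}
  (fun a b => E t (val a) (val b)) (exist _ (root t) kept_root) (fun a => lab t (val a)).

Lemma kept_val (w : V pruned) : kept (val w).
Proof. exact/asboolP/(valP w). Qed.

Lemma reach_pruned k (a b : V pruned) : reach pruned k a b -> reach t k (val a) (val b).
Proof. by elim=> [u | {}k u w v uw _ IH]; [apply: reach0 | apply: reachS IH]. Qed.

Lemma kept_at_reach_pruned k w (kw : asbool (kept w)) :
  kept_at k w -> reach pruned k (root pruned) (exist _ w kw).
Proof.
elim: k w kw => [|k IH] w kw /=.
  move=> wr; subst w; have -> : exist _ (root t) kw = root pruned by apply: val_inj.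
  exact: reach0.
move=> [v kv vw]; have kv' : asbool (kept v) by apply/asboolP; exists k.
rewrite -addn1; apply: reach_trans (IH _ kv' kv) _.
exact: (reach1 (t := pruned) (u := exist _ v kv') (z := exist _ w kw) (selected_child vw)).
Qed.

Lemma pruned_in_T : in_T d pruned.
Proof.
case: (t_tree) => [no_parent [parent _]]; split; [|split].
- by move=> v; apply: no_parent.
- move=> v vr; have [[|k] kv] := kept_val v; first by case: vr; apply: val_inj.
  move: kv => [u ku uv]; have ku' : asbool (kept u) by apply/asboolP; exists k.
  exists (exist _ u ku'); split; first exact: selected_child uv.
  by move=> u' u'v; apply: val_inj; apply: (parent_uniq t_tree u'v (selected_child uv)).
- case=> w kw; have [k kw'] := kept_val (exist _ w kw).
  by exists k; split; [apply: kept_at_le kw' | apply: kept_at_reach_pruned].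
Qed.

Lemma kept_at_child k v w : kept_at k v -> E t v w -> kept_at k.+1 w ->
  List.In w (selected (d - k.+1) v).
Proof.
move=> kv vw [v' kv' v'w]; suff <- : v' = v by [].
exact: (parent_uniq t_tree (selected_child v'w) vw).
Qed.

Lemma type_of_pruned h k (w : V pruned) : kept_at k (val w) -> d - k = h ->
  type_of (colouring m (fun _ (_ : V pruned) => False)) thr h w = ty h (val w).
Proof.
elim: h k w => [|h IH] k w kw // dk; apply/type_ofS_eqP; split=> // τ.
have dk1 : d - k.+1 = h by lia.
have [_ _ <-] := selectedP h (val w); symmetry; apply: capcard_inj val_inj _ => z.
split=> [[zw τz] | [z' [[wz' τz'] <-]]].
  have kz : kept_at k.+1 z by exists (val w); rewrite ?dk1.
  have kz' : asbool (kept z) by apply/asboolP; exists k.+1.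
  exists (exist _ z kz'); split=> //; split; first exact: selected_child zw.
  by rewrite (IH k.+1).
have [k2 kz'] := kept_val z'.
have wz'_t : E t (val w) (val z') := wz'.
have k2k := depth_uniq t_tree (kept_at_reach kz') (reach_trans (kept_at_reach kw) (reach1 wz'_t)).
rewrite addn1 in k2k; subst k2.
split; last by rewrite -(IH k.+1).
by have := kept_at_child kw wz' kz'; rewrite dk1.
Qed.

Lemma same_type_pruned : same_type m d m (fun _ (_ : V pruned) => False) (fun _ (_ : V t) => False).
Proof. exact: (type_of_pruned (w := root pruned) (k := 0) erefl (subn0 d)). Qed.

Lemma pruned_leaf (x : V pruned) : (forall y, ~ E pruned x y) -> forall z, ~ E t (val x) z.
Proof.
move=> leaf z xz; have [k kx] := kept_val x.
have kd := child_depth t_tree (kept_at_reach kx) xz.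
have [_ _ sel_count] := selectedP (d - k.+1) (val x).
have : 0 < capcard (thr (d - k.+1))
             (fun w => List.In w (selected (d - k.+1) (val x)) /\ ty (d - k.+1) w = ty (d - k.+1) z).
  by rewrite sel_count; apply: (capcard_gt0 (a := z)) => //; apply: threshold_gt0.
move=> /capcard_gt0_ex [y [xy _]]; have ky : asbool (kept y) by apply/asboolP; exists k.+1, (val x).
exact: (leaf (exist _ y ky) (selected_child xy)).
Qed.

Lemma kept_descendant k z : reach t k (root t) z ->
  exists2 z', kept_at k z' & ty (d - k) z' = ty (d - k) z.
Proof.
elim: k z => [|k IH] z; first by move=> /reach0_inv <-; exists (root t).
move=> /reachS_last [y ry yz]; have [y' ky' eq_y] := IH _ ry.
have kd := child_depth t_tree ry yz.
rewrite (_ : d - k = (d - k.+1).+1) in eq_y; last by lia.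
move: eq_y => /type_ofS_eqP [_ eq_count].
have : 0 < capcard (thr (d - k.+1)) (fun w => E t y' w /\ ty (d - k.+1) w = ty (d - k.+1) z).
  by rewrite eq_count; apply: (capcard_gt0 (a := z)) => //; apply: threshold_gt0.
have [_ _ <-] := selectedP (d - k.+1) y'.
by move=> /capcard_gt0_ex [z' [y'z' eq_z']]; exists z' => //; exists y'.
Qed.

Lemma pruned_depth k :
  (exists v : V pruned, reach pruned k (root pruned) v) <-> (exists v, reach t k (root t) v).
Proof.
split=> [[v /reach_pruned rv] | [z /kept_descendant [z' kz' _]]]; first by exists (val v).
have kz'' : asbool (kept z') by apply/asboolP; exists k.
by exists (exist _ z' kz''); apply: kept_at_reach_pruned.
Qed.

Lemma pruned_height h : has_height pruned h <-> has_height t h.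
Proof.
split=> [[/pruned_depth ex_h le_h] | [/pruned_depth ex_h le_h]]; split=> // k v.
  by move=> rv; have [v' rv'] := proj2 (pruned_depth k) (ex_intro _ v rv); apply: le_h rv'.
by move=> /reach_pruned; apply: le_h.
Qed.

Fixpoint level k : seq (V t) :=
  if k is k'.+1 then flatten (map (selected (d - k'.+1)) (level k')) else [:: root t].

Lemma in_level k w : kept_at k w -> List.In w (level k).
Proof.
elim: k w => [|k IH] w /=; first by move=> ->; left.
by move=> [v /IH kv vw]; apply/In_flatten; exists (selected (d - k.+1) v) => //; apply/In_map; exists v.
Qed.

Lemma size_level A k : (forall h, h < d -> #|htype (colour p m) thr h| * thr h <= A) ->
  k <= d -> size (level k) <= A ^ k.
Proof.
move=> le_A; elim: k => [|k IH] //= kd.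
apply: leq_trans (size_flatten_le (b := A) _) _.
  by move=> v _; have [_ le_sel _] := selectedP (d - k.+1) v; apply: leq_trans le_sel (le_A _ _); lia.
by rewrite expnSr leq_mul2r IH ?orbT //; lia.
Qed.

Lemma card_pruned A : 0 < A -> (forall h, h < d -> #|htype (colour p m) thr h| * thr h <= A) ->
  card_le pruned (d.+1 * A ^ d).
Proof.
move=> A0 le_A; exists (pmap insub (flatten (map level (iota 0 d.+1)))); split.
  rewrite size_pmap; apply: leq_trans (count_size _ _) _.
  apply: leq_trans (size_flatten_le (b := A ^ d) _) _; last by rewrite size_iota.
  move=> k /In_mem; rewrite mem_iota add0n ltnS => kd.
  by apply: leq_trans (size_level le_A kd) _; rewrite leq_pexp2l.
move=> v; apply: In_pmap_insub; have [k kv] := kept_val v.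
apply/In_flatten; exists (level k); last exact: in_level.
by apply/In_map; exists k => //; apply/In_mem; rewrite mem_iota add0n ltnS; apply: kept_at_le kv.
Qed.

End Prune.

(** * Tower bounds *)

Lemma tower_mono k x y : x <= y -> tower k x <= tower k y.
Proof. by elim: k => [|k IH] //= xy; rewrite leq_exp2l // IH. Qed.

Lemma tower_ge k x : x <= tower k x.
Proof. by elim: k => [|k IH] //=; apply: leq_trans IH (ltnW (ltn_expl _ _)). Qed.

Lemma tower_mul k a x : 0 < a -> 0 < x -> a * tower k x <= tower k (a * x).
Proof.
move=> a0 x0; elim: k => [|k IH] //=; set y := tower k x.
have y0 : 0 < y by apply: leq_trans x0 (tower_ge _ _).
apply: leq_trans (_ : 2 ^ (a * y) <= _); last by rewrite leq_exp2l.
have -> : a * y = y + a.-1 * y by rewrite -{1}(prednK a0) mulSn.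
rewrite expnD [a * _]mulnC leq_mul2l; apply/orP; right.
rewrite -{1}(prednK a0); apply: leq_trans (ltn_expl _ (isT : 1 < 2)) _.
by rewrite leq_exp2l // leq_pmulr.
Qed.

Lemma sq_add3_le y : 0 < y -> 3 + y * y <= 2 ^ (2 * y).
Proof.
elim: y => // y IH _; case: y IH => [|y] IH //.
have := IH isT; have : y.+1 < 2 ^ (2 * y.+1).
  by apply: leq_trans (ltn_expl _ (isT : 1 < 2)) _; rewrite leq_exp2l //; lia.
by rewrite [2 * y.+2]mulnS expnD; set z := 2 ^ (2 * y.+1); rewrite (_ : 2 ^ 2 = 4) //; nia.
Qed.

Section Bounds.
Variables (p m : nat).
Hypotheses (p_gt0 : 0 < p) (m_gt0 : 0 < m).

Definition log_size := m + up_log 2 p.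

Fixpoint type_exp h :=
  if h is h'.+1 then log_size + (2 + m * type_exp h') * 2 ^ type_exp h' else log_size.

Lemma card_colour_le : #|colour p m| <= 2 ^ log_size.
Proof.
rewrite card_prod card_ffun !card_ord card_bool /log_size expnD mulnC leq_mul2l.
by apply/orP; right; apply: up_logP.
Qed.

Lemma threshold_le h B : (forall r, r <= m -> #|htype (colour p m) (threshold p m r) h| <= 2 ^ B) ->
  forall r, r <= m -> threshold p m r h <= 2 ^ (1 + r * B).
Proof.
move=> le_B; elim=> [|r IH] // rm /=.
by rewrite mulSn addnCA expnD leq_mul ?le_B ?IH //; apply: ltnW.
Qed.

Lemma card_htype_le h r : r <= m -> #|htype (colour p m) (threshold p m r) h| <= 2 ^ type_exp h.
Proof.
elim: h r => [|h IH] r rm; first exact: card_colour_le.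
rewrite card_htypeS /= expnD leq_mul ?card_colour_le // expnM.
have le_thr : (threshold p m r h).+1 <= 2 ^ (2 + m * type_exp h).
  apply: (@leq_trans (2 ^ (2 + r * type_exp h))); last by rewrite leq_exp2l // leq_add2l leq_mul2r rm orbT.
  have := threshold_le IH rm; rewrite (_ : 2 + _ = (1 + r * type_exp h).+1) // expnS.
  have : 0 < 2 ^ (1 + r * type_exp h) by rewrite expn_gt0.
  by set z := 2 ^ _; lia.
apply: (@leq_trans ((2 ^ (2 + m * type_exp h)) ^ #|htype (colour p m) (threshold p m r) h|)).
  by rewrite leq_exp2r // card_htype_gt0 // card_colour_gt0.
by rewrite leq_pexp2l ?expn_gt0 // IH.
Qed.

Lemma type_exp_ge h : log_size <= type_exp h.
Proof. by case: h => //= h; apply: leq_addr. Qed.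

Lemma type_exp_mono h h' : h <= h' -> type_exp h <= type_exp h'.
Proof.
move/subnK <-; elim: (h' - h) => [|k IH] //=; apply: leq_trans IH _.
by rewrite addSn /=; set y := type_exp _; apply: leq_trans (ltnW (ltn_expl y (isT : 1 < 2))) _; nia.
Qed.

Lemma type_expS_le h : type_exp h.+1 <= 2 ^ (3 * type_exp h).
Proof.
rewrite /= (_ : 3 * _ = 2 * type_exp h + type_exp h); last by lia.
set y := type_exp h; have ly : log_size <= y := type_exp_ge h.
have my : m <= y by apply: leq_trans ly; apply: leq_addr.
have yz := ltn_expl y (isT : 1 < 2); rewrite expnD; set z := 2 ^ y.
have h1 : (2 + m * y) * z <= (2 + y * y) * z by rewrite leq_mul2r leq_add2l leq_mul2r my !orbT.
have h2 : (3 + y * y) * z <= 2 ^ (2 * y) * z.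
  by rewrite leq_mul2r sq_add3_le ?orbT //; apply: leq_trans m_gt0 my.
by move: h1 h2; rewrite !mulnDl; lia.
Qed.

Lemma type_exp_tower h : type_exp h <= tower h (3 ^ h * log_size).
Proof.
elim: h => [|h IH] /=; first by rewrite mul1n.
apply: leq_trans (type_expS_le h) _; rewrite leq_exp2l // expnS -mulnA.
apply: leq_trans (tower_mul _ _ _) => //; first by rewrite leq_mul2l IH orbT.
by rewrite muln_gt0 expn_gt0 /= addn_gt0 m_gt0.
Qed.

Lemma index_bound d :
  #|htype (colour p m) (threshold p m m) d| <= tower d.+1 (3 ^ d * (d + 3) * m.+1 * log_size).
Proof.
apply: leq_trans (card_htype_le d (leqnn m)) _; rewrite /= leq_exp2l //.
apply: leq_trans (type_exp_tower d) (tower_mono _ _).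
by set a := 3 ^ d; set b := log_size; nia.
Qed.

Lemma children_bound h :
  #|htype (colour p m) (threshold p m m) h| * threshold p m m h <= 2 ^ (1 + m.+1 * type_exp h).
Proof.
rewrite mulSn addnCA expnD leq_mul ?card_htype_le //.
by apply: threshold_le => // r rm; apply: card_htype_le.
Qed.

Lemma card_bound d :
  d.+1 * (2 ^ (1 + m.+1 * type_exp d.-1)) ^ d <= tower d (3 ^ d * (d + 3) * m.+1 * log_size).
Proof.
have ls0 : 0 < log_size by rewrite addn_gt0 m_gt0.
case: d => [|d]; first by rewrite /= mul1n muln_gt0 ls0 andbT.
rewrite [d.+1.-1]/=; set y := type_exp d; have y0 : 0 < y := leq_trans ls0 (type_exp_ge d).
apply: (@leq_trans (2 ^ (d.+1 * ((m + 3) * y)))).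
  rewrite -expnM; apply: (@leq_trans (2 ^ d.+1 * 2 ^ ((1 + m.+1 * y) * d.+1))).
    by rewrite leq_mul2r ltn_expl ?orbT.
  by rewrite -expnD leq_exp2l //; nia.
rewrite [tower d.+1 _]/= leq_exp2l //.
apply: (@leq_trans (d.+1 * (m + 3) * tower d (3 ^ d * log_size))).
  by rewrite -mulnA leq_mul2l leq_mul2l type_exp_tower !orbT.
apply: leq_trans (tower_mul _ _ _) (tower_mono _ _); rewrite ?muln_gt0 ?expn_gt0 ?ls0 ?addn_gt0 ?orbT //.
by rewrite expnS; set a := 3 ^ d; set b := log_size; nia.
Qed.

End Bounds.

Lemma pruned_leaf_hereditary p m d (t : lstruct p) :
  in_T d t -> leaf_hereditary_subtree (pruned m d t) t.
Proof.
move=> t_tree; exists val; split; first exact: val_inj.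
by split=> //; split=> //; split=> // x; apply: pruned_leaf.
Qed.

Lemma card_le_trans p (t : lstruct p) N N' : card_le t N -> N <= N' -> card_le t N'.
Proof. by move=> [l [sl hl]] NN'; exists l; split=> //; apply: leq_trans NN'. Qed.

Lemma index_le_key m d p N (T : finType) (key : lstruct p -> T) : (0 < p -> #|T| <= N) ->
  (forall t1 t2, in_T d t1 -> in_T d t2 -> key t1 = key t2 -> mso_equiv m t1 t2) ->
  index_le m d p N.
Proof.
move=> TN key_equiv f f_tree; have : ~~ injectiveb (key \o f).
  have := TN (lstruct_p_gt0 (f ord0)); apply/contraL => /injectiveP /leq_card.
  by rewrite card_ord; lia.
by move=> /injectivePn [i [j ij key_ij]]; exists i, j; split=> //; apply: key_equiv.
Qed.

Definition singleton_tree p (i : 'I_p) : lstruct p := LStruct unit (fun _ _ => False) tt (fun _ => i).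

Lemma singleton_tree_in_T p (i : 'I_p) : in_T 0 (singleton_tree i).
Proof.
split; first by move=> v.
split; first by case=> /(_ erefl).
by case; exists 0; split=> //; apply: reach0.
Qed.

Lemma index_ge_singletons m p : index_ge m 0 p p.
Proof.
exists (@singleton_tree p); split=> [i | i j ij equiv_ij]; first exact: singleton_tree_in_T.
have := equiv_ij (FP i TRoot) (conj erefl erefl) (leq0n _).
by rewrite /models /= => -[/(_ erefl) ji _]; rewrite ji eqxx in ij.
Qed.

Definition zeta_coef d := 3 ^ d * (d + 3).

Lemma zeta_coef_increasing a b : a < b -> zeta_coef a < zeta_coef b.
Proof.
move=> ab; apply: (@leq_trans (3 ^ a * (b + 3))); first by rewrite ltn_pmul2l ?expn_gt0 // ltn_add2r.
by rewrite leq_mul2r leq_pexp2l ?orbT // ltnW.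
Qed.

Lemma card_pruned_zeta m d p (t : lstruct p) : 0 < m -> in_T d t ->
  card_le (pruned m d t) (zeta zeta_coef d p m d).
Proof.
move=> m_gt0 t_tree; have p_gt0 := lstruct_p_gt0 t.
apply: card_le_trans (card_pruned t_tree _ _) (card_bound p_gt0 m_gt0 d); first by rewrite expn_gt0.
move=> h hd; apply: leq_trans (children_bound p_gt0 m_gt0 h) _.
by rewrite leq_exp2l // leq_add2l leq_mul2l type_exp_mono ?orbT //; lia.
Qed.

Lemma index_le_zeta m d p : 0 < m -> index_le m d p (zeta zeta_coef d p m d.+1).
Proof.
move=> m_gt0; pose key (t : lstruct p) :=
  type_of (colouring m (fun _ (_ : V t) => False)) (threshold p m m) d (root t).
apply: (index_le_key (key := key)); first by move=> p_gt0; apply: index_bound.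
by move=> t1 t2 t1_tree t2_tree; apply: same_type_mso_equiv.
Qed.

Lemma index_le_labels m p : index_le m 0 p p.
Proof.
apply: (index_le_key (key := fun t => lab t (root t))) => [_ | t1 t2 t1_tree t2_tree lab12].
  by rewrite card_ord.
by apply: same_type_mso_equiv t1_tree t2_tree _; rewrite /same_type /= /colouring lab12.
Qed.

Theorem theorem8 (d p : nat) :
  exists g : nat -> nat, (forall a b, a < b -> g a < g b) /\
  forall m : nat, 0 < m ->
    (forall t : lstruct p, @in_T d p t ->
       exists t' : lstruct p,
         @in_T d p t' /\ leaf_hereditary_subtree t' t /\
         (forall h, has_height t' h <-> has_height t h) /\
         card_le t' (zeta g d p m d) /\
         mso_equiv m t' t) /\
    (if 1 <= d then index_le m d p (zeta g d p m d.+1)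
     else index_le m d p p /\ index_ge m d p p).
Proof.
exists zeta_coef; split; first exact: zeta_coef_increasing.
move=> m m_gt0; split.
  move=> t t_tree; exists (pruned m d t); split; first exact: pruned_in_T.
  split; first exact: pruned_leaf_hereditary.
  split; first exact: pruned_height.
  split; first exact: card_pruned_zeta.
  exact: same_type_mso_equiv (pruned_in_T m t_tree) t_tree (same_type_pruned m t_tree).
case: ifP => [_ | /negbT]; first exact: index_le_zeta.
rewrite -ltnNge ltnS leqn0 => /eqP ->.
by split; [apply: index_le_labels | apply: index_ge_singletons].
Qed.
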